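(* Let $n\ge 2$ be even. Consider the generalized $n$-gene repressilator system $$\dot r_i = a_i(p_{i-1}) - d_{r_i}(r_i),\qquad \dot p_i = k_i(r_i) - d_{p_i}(p_i),\qquad i=1,\dots,n,$$ (indices mod $n$), with functions satisfying the standing assumptions in the context. Assume: (i) $\lim_{x\to\infty} a_i(x)=0$ for all $i$; (ii) for all $i$, $\delta_i^R > a_i(0)$ and $\delta_i^P > k_i(d_{r_i}^{-1}(a_i(0)))$, where $\delta_i^R:=\lim_{x\to\infty} d_{r_i}(x)$ and $\delta_i^P:=\lim_{x\to\infty} d_{p_i}(x)$ (possibly $+\infty$); (iii) $d_{p_i}'(0)\neq 0$ and $d_{r_i}'(0)\neq 0$ for all $i$. Then the central steady state $E_C$ exists and is a steady state of the system: that is, for each $i$ the fixed-point equation $p_i = f_i\circ f_{i-1}\circ\cdots\circ f_1\circ f_n\circ\cdots\circ f_{i+1}(p_i)$ has a positive solution, and there are such solutions $p_1^*,\dots,p_n^*>0$ for which $$E_C=\big(d_{r_1}^{-1}(a_1(p_n^* )),\,d_{r_2}^{-1}(a_2(p_1^* )),\dots,d_{r_n}^{-1}(a_n(p_{n-1}^* )),\,p_1^*,\dots,p_n^*\big)$$ is a steady state.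
   Context: Standing assumptions: each $a_i:[0,\infty)\to\mathbb{R}$ is $C^1$, nonnegative, strictly decreasing, with $a_i(0)>0$. Each $d_{r_i}, d_{p_i}, k_i:[0,\infty)\to\mathbb{R}$ is $C^1$, vanishes at $0$, and is strictly increasing on $(0,\infty)$. Define $f_i := d_{p_i}^{-1}\circ k_i\circ d_{r_i}^{-1}\circ a_i$ (well defined under assumption (ii)). *)

From HB Require Import structures.
From mathcomp Require Import all_boot all_order all_algebra.
From mathcomp Require Import all_classical all_reals all_analysis.
Set Implicit Arguments. Unset Strict Implicit. Unset Printing Implicit Defensive.
Import Order.TTheory GRing.Theory Num.Theory.
Import numFieldNormedType.Exports.
Local Open Scope classical_set_scope.
Local Open Scope ring_scope.

Section Defs.
Variable R : realType.

Definition C1_on_nonneg (f df : R -> R) : Prop :=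
  {within `[0, +oo[, continuous df} /\
  (forall x : R, 0 < x -> is_derive x 1 f (df x)) /\
  ((fun h : R => h^-1 * (f h - f 0)) @ 0^'+ --> df 0).

(* inverse of f restricted to [0,oo): some x >= 0 with f x = y
   (unique when f is injective on [0,oo)); 0 if no such x exists. *)
Definition pos_inv (f : R -> R) (y : R) : R :=
  xget 0 [set x | 0 <= x /\ f x = y].

(* index i-1 modulo n, for indices 0 .. n-1 *)
Definition prev_idx (n i : nat) : nat := ((i + n.-1) %% n)%N.

Definition rep_f (a dr k dp : nat -> R -> R) (i : nat) : R -> R :=
  fun x => pos_inv (dp i) (k i (pos_inv (dr i) (a i x))).

(* f_i o f_{i-1} o ... o f_1 o f_n o ... o f_{i+1}  (indices mod n):
   first apply f_{i+1}, then f_{i+2}, ..., last f_i. *)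
Definition cyc_comp (f : nat -> R -> R) (n i : nat) (x : R) : R :=
  foldl (fun y k => f ((i + 1 + k) %% n)%N y) x (iota 0 n).

Definition repr_steady_state (n : nat) (a dr k dp : nat -> R -> R)
  (r p : nat -> R) : Prop :=
  forall i, (i < n)%N ->
    a i (p (prev_idx n i)) - dr i (r i) = 0 /\ k i (r i) - dp i (p i) = 0.

End Defs.

From HB Require Import structures.
From mathcomp Require Import all_boot all_order all_algebra.
From mathcomp Require Import all_classical all_reals all_analysis.
Set Implicit Arguments. Unset Strict Implicit. Unset Printing Implicit Defensive.
Import Order.TTheory GRing.Theory Num.Theory.
Import numFieldNormedType.Exports.
Local Open Scope classical_set_scope.
Local Open Scope ring_scope.

(* Each f_i is positive and nonincreasing on [0, +oo): d_{r_i} and d_{p_i} are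
   continuous, vanish at 0 and, by (ii), exceed at infinity every value they must
   invert, so by the intermediate value theorem their inverses are defined where
   needed; composing the decreasing a_i with increasing maps reverses order.
   As n is even, g := f_n o ... o f_1 is nondecreasing and bounded by f_n(0), so
   sup {x >= 0 | x <= g x} is a fixed point p of g.  Its orbit p_1 := f_1 p,
   p_2 := f_2 p_1, ..., p_n = p solves every cyclic fixed-point equation and,
   with r_i := d_{r_i}^{-1}(a_i(p_{i-1})), gives the steady state E_C. *)

Section pos_inv.
Variable R : realType.
Implicit Types (f : R -> R) (y : R).

Lemma pos_inv_ge0 f y : 0 <= pos_inv f y.
Proof. by rewrite /pos_inv; case: xgetP => // x _ []. Qed.

Lemma pos_invK f y : (exists x, 0 <= x /\ f x = y) -> f (pos_inv f y) = y.
Proof. by move=> /(xgetPex 0) []. Qed.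

Lemma pos_inv_gt0 f y : f 0 = 0 -> 0 < y -> f (pos_inv f y) = y ->
  0 < pos_inv f y.
Proof.
move=> f0 y_gt0 fK; rewrite lt_neqAle pos_inv_ge0 andbT.
by apply: contraTneq y_gt0 => e; rewrite -fK -e f0 ltxx.
Qed.

Lemma pos_inv_le f y1 y2 :
  (forall x y, 0 <= x -> x < y -> f x < f y) ->
  f (pos_inv f y1) = y1 -> f (pos_inv f y2) = y2 -> y1 <= y2 ->
  pos_inv f y1 <= pos_inv f y2.
Proof.
move=> f_incr f1 f2 y12; rewrite leNgt; apply/negP.
by move=> /(f_incr _ _ (pos_inv_ge0 _ _)); rewrite f1 f2 ltNge y12.
Qed.

End pos_inv.

Section C1_on_nonneg.
Variables (R : realType) (f df : R -> R).
Hypothesis f_C1 : C1_on_nonneg f df.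

Lemma C1_on_nonneg_cvg_right : f x @[x --> 0^'+] --> f 0.
Proof.
case: f_C1 => _ [_ df0].
have id0 : (fun h : R => h) @ 0^'+ --> (0 : R).
  by apply: cvg_at_right_filter; exact: cvg_id.
have := cvgM id0 df0; rewrite mul0r => /(_ _) slope0.
apply/subr_cvg0; apply: cvg_trans slope0; apply: near_eq_cvg.
by near=> h; rewrite /= mulrA mulfV ?mul1r.
Unshelve. all: by end_near. Qed.

Lemma C1_on_nonneg_continuous x : 0 < x -> {for x, continuous f}.
Proof.
case: f_C1 => _ [df_ok _] x_gt0.
have : derivable f x 1 by case: (df_ok x x_gt0).
by move/derivable1_diffP; exact: differentiable_continuous.
Qed.

Hypotheses (f0 : f 0 = 0) (f_incr : forall x y, 0 < x -> x < y -> f x < f y).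

(* Strict increase is only assumed on (0, +oo); right continuity at 0 is what
   extends it to [0, +oo). *)
Lemma C1_incr_gt0 y : 0 < y -> 0 < f y.
Proof.
move=> y_gt0; rewrite ltNge; apply/negP => fy_le0.
have y2_gt0 : 0 < y / 2 by rewrite divr_gt0.
have y2_lt : y / 2 < y by rewrite ltr_pdivrMr // ltr_pMr // ltr1n.
have fy2_lt0 : f (y / 2) < 0 := lt_le_trans (f_incr y2_gt0 y2_lt) fy_le0.
have := C1_on_nonneg_cvg_right; move/cvgrPdist_lt => /(_ (- f (y / 2))).
rewrite oppr_gt0 => /(_ fy2_lt0) near_f0.
have [h [h_gt0 [h_lt fh_small]]] :
    exists h, 0 < h /\ h < y / 2 /\ `|f 0 - f h| < - f (y / 2).
  apply: (@filter_ex _ (0 : R)^'+); near=> h.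
  split; first by near: h; exact: nbhs_right_gt.
  split; first by near: h; exact: nbhs_right_lt.
  by near: h; exact: near_f0.
move: fh_small; rewrite f0 sub0r normrN => fh_small.
have : - f h < - f (y / 2) by apply: le_lt_trans fh_small; rewrite -normrN ler_norm.
by rewrite ltrN2 ltNge (ltW (f_incr h_gt0 h_lt)).
Unshelve. all: by end_near. Qed.

Lemma C1_incr_nonneg x y : 0 <= x -> x < y -> f x < f y.
Proof.
rewrite le_eqVlt => /predU1P[<- y_gt0|]; last exact: f_incr.
by rewrite f0; exact: C1_incr_gt0.
Qed.

Lemma C1_incr_ivt v b : 0 <= v -> 0 <= b -> v <= f b ->
  exists c, 0 <= c /\ f c = v.
Proof.
move=> v_ge0; rewrite le_eqVlt => /predU1P[<-|b_gt0] vb.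
  by exists 0; split => //; apply/eqP; rewrite eq_le vb f0 v_ge0.
have f_cont : {within `[0, b], continuous f}.
  apply/continuous_within_itvP => //; split.
  - by move=> x; rewrite in_itv /= => /andP[x_gt0 _]; exact: C1_on_nonneg_continuous.
  - exact: C1_on_nonneg_cvg_right.
  - by apply: cvg_at_left_filter; exact: C1_on_nonneg_continuous.
have v_between : Num.min (f 0) (f b) <= v <= Num.max (f 0) (f b).
  by rewrite f0 min_l ?max_r ?v_ge0 ?vb // ltW // C1_incr_gt0.
have [c] := IVT (ltW b_gt0) f_cont v_between.
by rewrite in_itv /= => /andP[c_ge0 _] fc; exists c.
Qed.

Lemma C1_incr_le x y : 0 <= x -> x <= y -> f x <= f y.
Proof.
move=> x_ge0; rewrite le_eqVlt => /predU1P[->//|xy].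
exact/ltW/C1_incr_nonneg.
Qed.

End C1_on_nonneg.

Section monotone.
Variable R : realType.
Implicit Types (f g : R -> R).

Lemma lt_lim_pinfty f A :
  (forall x y, 0 <= x -> x <= y -> f x <= f y) ->
  (A%:E < lim ((f x)%:E @[x --> +oo%R]))%E -> exists b, 0 <= b /\ A < f b.
Proof.
move=> f_ndecr A_lt.
pose g x := (f (Num.max x 0))%:E.
have max_ge0 (x : R) : 0 <= Num.max x 0 by rewrite le_max lexx orbT.
have g_ndecr : nondecreasing_fun g.
  move=> x y xy; rewrite /g lee_fin f_ndecr //.
  by rewrite ge_max !le_max xy lexx orbT.
have f_cvg : (f x)%:E @[x --> +oo%R] --> ereal_sup (range g).
  apply: cvg_trans (nondecreasing_cvge g_ndecr); apply: near_eq_cvg.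
  near=> x; rewrite /g max_l //; apply: ltW; near: x; exact: nbhs_pinfty_gt.
move: A_lt; rewrite (cvg_lim _ f_cvg) // => /ereal_sup_gt [_ [x _ <-]].
by rewrite /g lte_fin; exists (Num.max x 0).
Unshelve. all: by end_near. Qed.

Lemma nondecreasing_bounded_fixpoint g M :
  (forall x y, 0 <= x -> x <= y -> g x <= g y) ->
  (forall x, 0 <= x -> 0 <= g x /\ g x <= M) ->
  exists p, 0 <= p /\ g p = p.
Proof.
move=> g_ndecr g_bnd.
pose S := [set x | 0 <= x /\ x <= g x].
have S0 : S 0 by split => //; case: (g_bnd 0).
have S_sup : has_sup S.
  split; first by exists 0.
  by exists M => x [x_ge0 xg]; apply: le_trans xg _; case: (g_bnd x).
have p_ge0 : 0 <= sup S := sup_upper_bound S_sup S0.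
have p_le : sup S <= g (sup S).
  apply: ge_sup; first by exists 0.
  move=> x [x_ge0 xg]; apply: (le_trans xg (g_ndecr _ _ x_ge0 _)).
  exact: (sup_upper_bound S_sup (conj x_ge0 xg)).
have gp_le : g (sup S) <= sup S.
  apply: (sup_upper_bound S_sup); split; first by case: (g_bnd _ p_ge0).
  exact: g_ndecr.
by exists (sup S); split => //; apply/eqP; rewrite eq_le gp_le.
Qed.

End monotone.

Section gene.
Variables (R : realType) (a dr k dp dr' k' dp' : R -> R).
Hypotheses (a_ge0 : forall x, 0 <= x -> 0 <= a x)
  (a_decr : forall x y, 0 <= x -> x < y -> a y < a x).
Hypotheses (dr_C1 : C1_on_nonneg dr dr') (dr0 : dr 0 = 0)
  (dr_incr : forall x y, 0 < x -> x < y -> dr x < dr y).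
Hypotheses (k_C1 : C1_on_nonneg k k') (k0 : k 0 = 0)
  (k_incr : forall x y, 0 < x -> x < y -> k x < k y).
Hypotheses (dp_C1 : C1_on_nonneg dp dp') (dp0 : dp 0 = 0)
  (dp_incr : forall x y, 0 < x -> x < y -> dp x < dp y).
Hypotheses (a0_lt_dr : ((a 0)%:E < lim ((dr x)%:E @[x --> +oo%R]))%E)
  (k_lt_dp : ((k (pos_inv dr (a 0)))%:E < lim ((dp x)%:E @[x --> +oo%R]))%E).

Local Notation mrna x := (pos_inv dr (a x)).
Local Notation protein x := (pos_inv dp (k (mrna x))).

Lemma a_gt0 x : 0 <= x -> 0 < a x.
Proof.
move=> x_ge0; have x_lt : x < x + 1 by rewrite ltrDl.
exact: le_lt_trans (a_ge0 (le_trans x_ge0 (ltW x_lt))) (a_decr x_ge0 x_lt).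
Qed.

Lemma a_le x y : 0 <= x -> x <= y -> a y <= a x.
Proof.
by move=> x_ge0; rewrite le_eqVlt => /predU1P[->//|/(a_decr x_ge0)/ltW].
Qed.

Lemma mrna_eq x : 0 <= x -> dr (mrna x) = a x.
Proof.
move=> x_ge0.
have [b [b_ge0 a0_lt]] := lt_lim_pinfty (C1_incr_le dr_C1 dr0 dr_incr) a0_lt_dr.
apply/pos_invK/(C1_incr_ivt dr_C1 dr0 dr_incr _ b_ge0); first exact/ltW/a_gt0.
exact: le_trans (a_le (lexx 0) x_ge0) (ltW a0_lt).
Qed.

Lemma mrna_gt0 x : 0 <= x -> 0 < mrna x.
Proof. by move=> x_ge0; apply: pos_inv_gt0 => //; [exact: a_gt0|exact: mrna_eq]. Qed.

Lemma mrna_le x y : 0 <= x -> x <= y -> mrna y <= mrna x.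
Proof.
move=> x_ge0 xy; apply: pos_inv_le (C1_incr_nonneg dr_C1 dr0 dr_incr) _ _ _.
- exact: mrna_eq (le_trans x_ge0 xy).
- exact: mrna_eq.
- exact: a_le.
Qed.

Lemma protein_eq x : 0 <= x -> dp (protein x) = k (mrna x).
Proof.
move=> x_ge0.
have [b [b_ge0 k_lt]] := lt_lim_pinfty (C1_incr_le dp_C1 dp0 dp_incr) k_lt_dp.
apply/pos_invK/(C1_incr_ivt dp_C1 dp0 dp_incr _ b_ge0).
  exact/ltW/(C1_incr_gt0 k_C1 k0 k_incr)/mrna_gt0.
apply: le_trans (ltW k_lt); apply: C1_incr_le k_C1 k0 k_incr _ _ _ _.
- exact: pos_inv_ge0.
- exact: mrna_le.
Qed.

Lemma protein_gt0 x : 0 <= x -> 0 < protein x.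
Proof.
move=> x_ge0; apply: pos_inv_gt0 => //; last exact: protein_eq.
exact/(C1_incr_gt0 k_C1 k0 k_incr)/mrna_gt0.
Qed.

Lemma protein_le x y : 0 <= x -> x <= y -> protein y <= protein x.
Proof.
move=> x_ge0 xy; apply: pos_inv_le (C1_incr_nonneg dp_C1 dp0 dp_incr) _ _ _.
- exact: protein_eq (le_trans x_ge0 xy).
- exact: protein_eq.
apply: C1_incr_le k_C1 k0 k_incr _ _ _ _; first exact: pos_inv_ge0.
exact: mrna_le.
Qed.

Lemma gene_steady_spec :
  [/\ forall x y, 0 <= x -> x <= y -> protein y <= protein x,
      forall x, 0 <= x -> 0 < protein x,
      forall x, 0 <= x -> dr (mrna x) = a x &
      forall x, 0 <= x -> dp (protein x) = k (mrna x)].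
Proof.
by split; [exact: protein_le | exact: protein_gt0 | exact: mrna_eq | exact: protein_eq].
Qed.

End gene.

Lemma prev_idxS_mod n i : (i < n)%N -> ((prev_idx n i).+1 %% n = i)%N.
Proof.
move=> i_lt; have n_gt0 : (0 < n)%N by apply: leq_ltn_trans i_lt.
by rewrite /prev_idx -addn1 modnDml -addnA addn1 prednK // modnDr modn_small.
Qed.

Section cyclic_iteration.
Variables (R : realType) (F : nat -> R -> R) (n : nat).
Hypotheses (n_gt0 : (0 < n)%N)
  (F_ge0 : forall i x, (i < n)%N -> 0 <= x -> 0 <= F i x)
  (F_le : forall i x y, (i < n)%N -> 0 <= x -> x <= y -> F i y <= F i x).

Fixpoint cyc_iter (m : nat) (x : R) : R :=
  if m is m'.+1 then F (m' %% n) (cyc_iter m' x) else x.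

Lemma cyc_iter_ge0 m x : 0 <= x -> 0 <= cyc_iter m x.
Proof. by move=> x_ge0; elim: m => //= m; apply: F_ge0; exact: ltn_pmod. Qed.

Lemma cyc_iter_homo m x y : 0 <= x -> x <= y ->
  if odd m then cyc_iter m y <= cyc_iter m x else cyc_iter m x <= cyc_iter m y.
Proof.
move=> x_ge0 xy; elim: m => //= m; have m_lt := ltn_pmod m n_gt0.
have [ym_ge0 xm_ge0] := (cyc_iter_ge0 m (le_trans x_ge0 xy), cyc_iter_ge0 m x_ge0).
by case: (odd m) => /= IH; exact: F_le.
Qed.

Lemma cyc_iter_fixpoint : ~~ odd n -> exists p, 0 <= p /\ cyc_iter n p = p.
Proof.
move=> n_even; apply: (@nondecreasing_bounded_fixpoint _ _ (F (n.-1 %% n) 0)).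
  by move=> x y x_ge0 xy; have := cyc_iter_homo n x_ge0 xy; rewrite (negbTE n_even).
move=> x x_ge0; split; first exact: cyc_iter_ge0.
rewrite -[in cyc_iter n x](prednK n_gt0) /=.
by apply: F_le; [exact: ltn_pmod | | exact: cyc_iter_ge0].
Qed.

Variable p : R.
Hypothesis p_fix : cyc_iter n p = p.

Definition cyc_orbit (j : nat) : R := cyc_iter (j %% n).+1 p.

Lemma cyc_orbit_ge0 j : 0 <= p -> 0 <= cyc_orbit j.
Proof. exact: cyc_iter_ge0. Qed.

Lemma cyc_orbit_mod j : cyc_orbit (j %% n) = cyc_orbit j.
Proof. by rewrite /cyc_orbit modn_mod. Qed.

Lemma cyc_orbitS j : cyc_orbit j.+1 = F (j.+1 %% n) (cyc_orbit j).
Proof.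
rewrite /cyc_orbit -[j.+1]addn1 -modnDml addn1.
have := ltn_pmod j n_gt0; move: (j %% n)%N => t.
rewrite leq_eqVlt => /predU1P[tn|t_lt]; last by rewrite [in LHS](modn_small t_lt).
by rewrite tn modnn p_fix /= mod0n.
Qed.

Lemma cyc_comp_orbit i : cyc_comp F n i (cyc_orbit i) = cyc_orbit i.
Proof.
suff orbit_shift m : foldl (fun y k => F ((i + 1 + k) %% n) y) (cyc_orbit i) (iota 0 m)
    = cyc_orbit (i + m).
  by rewrite /cyc_comp orbit_shift -cyc_orbit_mod modnDr cyc_orbit_mod.
elim: m => [|m IH]; first by rewrite addn0.
by rewrite -[m.+1]addn1 iotaD foldl_cat IH /= add0n addnA addnAC addn1 -cyc_orbitS.
Qed.

Lemma cyc_orbit_prev i : (i < n)%N -> cyc_orbit i = F i (cyc_orbit (prev_idx n i)).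
Proof.
move=> i_lt; have := cyc_orbitS (prev_idx n i); rewrite prev_idxS_mod // => <-.
by rewrite -[RHS]cyc_orbit_mod prev_idxS_mod.
Qed.

End cyclic_iteration.

Theorem proposition2 (R : realType) (n : nat)
  (a dr k dp : nat -> R -> R) (a' dr' k' dp' : nat -> R -> R) :
  (2 <= n)%N -> ~~ odd n ->
  (* standing assumptions *)
  (forall i, (i < n)%N ->
     [/\ C1_on_nonneg (a i) (a' i),
         (forall x, 0 <= x -> 0 <= a i x),
         (forall x y, 0 <= x -> x < y -> a i y < a i x) &
         0 < a i 0]) ->
  (forall i, (i < n)%N ->
     [/\ C1_on_nonneg (dr i) (dr' i), dr i 0 = 0 &
         forall x y, 0 < x -> x < y -> dr i x < dr i y]) ->
  (forall i, (i < n)%N ->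
     [/\ C1_on_nonneg (dp i) (dp' i), dp i 0 = 0 &
         forall x y, 0 < x -> x < y -> dp i x < dp i y]) ->
  (forall i, (i < n)%N ->
     [/\ C1_on_nonneg (k i) (k' i), k i 0 = 0 &
         forall x y, 0 < x -> x < y -> k i x < k i y]) ->
  (* (i) *)
  (forall i, (i < n)%N -> a i x @[x --> +oo] --> 0) ->
  (* (ii) *)
  (forall i, (i < n)%N ->
     ((a i 0)%:E < lim ((dr i x)%:E @[x --> +oo%R]))%E /\
     ((k i (pos_inv (dr i) (a i 0)))%:E < lim ((dp i x)%:E @[x --> +oo%R]))%E) ->
  (* (iii) *)
  (forall i, (i < n)%N -> dp' i 0 != 0 /\ dr' i 0 != 0) ->
  exists ps : nat -> R,
    (forall i, (i < n)%N ->
       0 < ps i /\ ps i = cyc_comp (rep_f a dr k dp) n i (ps i)) /\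
    repr_steady_state n a dr k dp
      (fun i => pos_inv (dr i) (a i (ps (prev_idx n i)))) ps.
Proof.
move=> n_ge2 n_even Ha Hr Hp Hk _ Hlim _.
have n_gt0 : (0 < n)%N by apply: ltnW.
have gene i : (i < n)%N ->
  [/\ forall x y, 0 <= x -> x <= y -> rep_f a dr k dp i y <= rep_f a dr k dp i x,
      forall x, 0 <= x -> 0 < rep_f a dr k dp i x,
      forall x, 0 <= x -> dr i (pos_inv (dr i) (a i x)) = a i x &
      forall x, 0 <= x -> dp i (rep_f a dr k dp i x) = k i (pos_inv (dr i) (a i x))].
  move=> i_lt; move: (Ha i i_lt) (Hr i i_lt) (Hk i i_lt) (Hp i i_lt) (Hlim i i_lt).
  move=> [_ a_ge0 a_decr _] [dr_C1 dr0 dr_incr] [k_C1 k0 k_incr] [dp_C1 dp0 dp_incr].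
  move=> [a0_lt_dr k_lt_dp].
  exact: gene_steady_spec a_ge0 a_decr dr_C1 dr0 dr_incr k_C1 k0 k_incr
    dp_C1 dp0 dp_incr a0_lt_dr k_lt_dp.
have F_ge0 i x : (i < n)%N -> 0 <= x -> 0 <= rep_f a dr k dp i x.
  by move=> _ _; exact: pos_inv_ge0.
have F_le i x y : (i < n)%N -> 0 <= x -> x <= y ->
    rep_f a dr k dp i y <= rep_f a dr k dp i x.
  by move=> /gene[F_le _ _ _]; exact: F_le.
have [p [p_ge0 p_fix]] := cyc_iter_fixpoint n_gt0 F_ge0 F_le n_even.
exists (cyc_orbit (rep_f a dr k dp) n p); split => i i_lt.
  have [_ F_gt0 _ _] := gene i i_lt.
  split; last by rewrite cyc_comp_orbit.
  by rewrite cyc_orbit_prev //; apply/F_gt0/cyc_orbit_ge0.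
have [_ _ mrna_eq protein_eq] := gene i i_lt.
have orbit_ge0 j := cyc_orbit_ge0 n_gt0 F_ge0 j p_ge0.
split; first by rewrite mrna_eq ?subrr.
by rewrite [in dp i _]cyc_orbit_prev // protein_eq ?subrr.
Qed.
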